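(* (1) $\Box$ and $\lozenge$ are not interdefinable in $\mathbf{K}\mathsf{biG}$, $\mathbf{K}\mathsf{biG}_{\mathsf{fb}}^\mathsf{f}$, and $\mathbf{K}\mathsf{biG}^\mathsf{f}$. (2) Both the $\Box$ and $\lozenge$ fragments of $\mathbf{K}\mathsf{biG}$ are more expressive than $\mathbf{K}$.
   Context: $\mathbf{K}\mathsf{biG}$ (resp. $\mathbf{K}\mathsf{biG}^\mathsf{f}$) is the set of formulas of the language over $\wedge,\vee,\rightarrow,\ominus,\Box,\lozenge$ valid on all crisp (resp. fuzzy) frames, where $\ominus$ is Gödel coimplication ($b\ominus_\mathsf{G}a=0$ if $b\le a$, else $b$), $a\rightarrow_\mathsf{G}b=1$ if $a\le b$ else $b$, $\wedge,\vee$ are $\min,\max$, and on crisp frames $\Box$/$\lozenge$ are infimum/supremum over successors, on fuzzy frames $v(\Box\phi,w)=\inf_{w'}\{wRw'\rightarrow_\mathsf{G}v(\phi,w')\}$, $v(\lozenge\phi,w)=\sup_{w'}\{wRw'\wedge_\mathsf{G}v(\phi,w')\}$; validity means value $1$ at every state. Subscript $\mathsf{fb}$ restricts to finitely branching frames. $\Box$ and $\lozenge$ are not interdefinable in $\mathbf{K}\mathsf{biG}_{\mathsf{fb}}$ (validities on finitely branching crisp frames). Finitely branching crisp frames are defined in $\mathbf{K}\mathsf{biG}$ by $\mathbf{1}\ominus\lozenge((p\ominus q)\wedge q)$, and every $\mathbf{K}$-definable class of frames is $\mathbf{K}\mathsf{biG}$-definable. *)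

From HB Require Import structures.
From mathcomp Require Import all_boot all_order all_algebra.
From mathcomp Require Import boolp classical_sets functions cardinality reals.
From mathcomp Require Import Rstruct.
Import Order.TTheory GRing.Theory Num.Theory.

Set Implicit Arguments.
Unset Strict Implicit.
Unset Printing Implicit Defensive.

Local Open Scope classical_set_scope.
Local Open Scope ring_scope.

Notation RR := Rdefinitions.R.

Inductive form : Type :=
  | Var   of nat
  | Bot
  | Top
  | And   of form & form
  | Or    of form & form
  | Imp   of form & form
  | Coimp of form & form
  | Box   of form
  | Dia   of form.

Fixpoint box_free (phi : form) : bool :=
  match phi with
  | Var _ | Bot | Top => true
  | And a b | Or a b | Imp a b | Coimp a b => box_free a && box_free b
  | Box _ => false
  | Dia a => box_free a
  end.

Fixpoint dia_free (phi : form) : bool :=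
  match phi with
  | Var _ | Bot | Top => true
  | And a b | Or a b | Imp a b | Coimp a b => dia_free a && dia_free b
  | Box a => dia_free a
  | Dia _ => false
  end.

Definition Iff (a b : form) : form := And (Imp a b) (Imp b a).

Definition gimp (a b : RR) : RR := if a <= b then 1 else b.
Definition gcoimp (b a : RR) : RR := if b <= a then 0 else b.

Fixpoint eval (W : Type) (bx dx : (W -> RR) -> W -> RR)
    (V : nat -> W -> RR) (phi : form) : W -> RR :=
  match phi with
  | Var n => V n
  | Bot => fun _ => 0
  | Top => fun _ => 1
  | And a b => fun w => Num.min (eval bx dx V a w) (eval bx dx V b w)
  | Or a b => fun w => Num.max (eval bx dx V a w) (eval bx dx V b w)
  | Imp a b => fun w => gimp (eval bx dx V a w) (eval bx dx V b w)
  | Coimp a b => fun w => gcoimp (eval bx dx V a w) (eval bx dx V b w)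
  | Box a => bx (eval bx dx V a)
  | Dia a => dx (eval bx dx V a)
  end.

(* Since all values lie in [0,1], adding 1 (resp. 0) to the set implements the
   conventions inf ∅ = 1, sup ∅ = 0 without changing nonempty infima/suprema. *)

Definition crisp_box (W : Type) (Rel : W -> W -> Prop) (f : W -> RR) (w : W) : RR :=
  inf ([set 1] `|` [set x | exists2 w', Rel w w' & x = f w']).
Definition crisp_dia (W : Type) (Rel : W -> W -> Prop) (f : W -> RR) (w : W) : RR :=
  sup ([set 0] `|` [set x | exists2 w', Rel w w' & x = f w']).

Definition fuzzy_box (W : Type) (Rd : W -> W -> RR) (f : W -> RR) (w : W) : RR :=
  inf ([set 1] `|` [set x | exists w', x = gimp (Rd w w') (f w')]).
Definition fuzzy_dia (W : Type) (Rd : W -> W -> RR) (f : W -> RR) (w : W) : RR :=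
  sup ([set 0] `|` [set x | exists w', x = Num.min (Rd w w') (f w')]).

Definition unit_val (W : Type) (V : nat -> W -> RR) : Prop :=
  forall n w, 0 <= V n w <= 1.

Definition fuzzy_frame (W : Type) (Rd : W -> W -> RR) : Prop :=
  forall w w', 0 <= Rd w w' <= 1.

Definition crisp_fb (W : Type) (Rel : W -> W -> Prop) : Prop :=
  forall w, finite_set [set w' | Rel w w'].

Definition fuzzy_fb (W : Type) (Rd : W -> W -> RR) : Prop :=
  forall w, finite_set [set w' | 0 < Rd w w'].

Definition crisp_frame_valid (W : Type) (Rel : W -> W -> Prop) (phi : form) : Prop :=
  forall V : nat -> W -> RR, unit_val V ->
  forall w, eval (crisp_box Rel) (crisp_dia Rel) V phi w = 1.

Definition fuzzy_frame_valid (W : Type) (Rd : W -> W -> RR) (phi : form) : Prop :=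
  forall V : nat -> W -> RR, unit_val V ->
  forall w, eval (fuzzy_box Rd) (fuzzy_dia Rd) V phi w = 1.

Definition KbiG (phi : form) : Prop :=
  forall (W : Type) (Rel : W -> W -> Prop), crisp_frame_valid Rel phi.
Definition KbiG_fb (phi : form) : Prop :=
  forall (W : Type) (Rel : W -> W -> Prop), crisp_fb Rel -> crisp_frame_valid Rel phi.
Definition KbiGf (phi : form) : Prop :=
  forall (W : Type) (Rd : W -> W -> RR), fuzzy_frame Rd -> fuzzy_frame_valid Rd phi.
Definition KbiGf_fb (phi : form) : Prop :=
  forall (W : Type) (Rd : W -> W -> RR), fuzzy_frame Rd -> fuzzy_fb Rd ->
    fuzzy_frame_valid Rd phi.

Definition not_interdefinable (L : form -> Prop) : Prop :=
  (~ exists chi, box_free chi /\ L (Iff (Box (Var 0)) chi)) /\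
  (~ exists chi, dia_free chi /\ L (Iff (Dia (Var 0)) chi)).

Inductive kform : Type :=
  | KVar of nat
  | KBot
  | KImp of kform & kform
  | KAnd of kform & kform
  | KOr  of kform & kform
  | KBox of kform
  | KDia of kform.

Fixpoint ksat (W : Type) (Rel : W -> W -> Prop) (V : nat -> W -> Prop)
    (w : W) (phi : kform) : Prop :=
  match phi with
  | KVar n => V n w
  | KBot => False
  | KImp a b => ksat Rel V w a -> ksat Rel V w b
  | KAnd a b => ksat Rel V w a /\ ksat Rel V w b
  | KOr a b => ksat Rel V w a \/ ksat Rel V w b
  | KBox a => forall w', Rel w w' -> ksat Rel V w' a
  | KDia a => exists2 w', Rel w w' & ksat Rel V w' a
  end.

Definition frame_class := forall W : Type, (W -> W -> Prop) -> Prop.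

Definition K_defines (G : kform -> Prop) (C : frame_class) : Prop :=
  forall (W : Type) (Rel : W -> W -> Prop),
    C W Rel <-> (forall phi, G phi -> forall V w, ksat Rel V w phi).

Definition K_definable (C : frame_class) : Prop := exists G, K_defines G C.

Definition KbiG_defines (G : form -> Prop) (C : frame_class) : Prop :=
  forall (W : Type) (Rel : W -> W -> Prop),
    C W Rel <-> (forall phi, G phi -> crisp_frame_valid Rel phi).

Definition more_expressive_than_K (frag : form -> bool) : Prop :=
  (forall C : frame_class, K_definable C ->
     exists G : form -> Prop, (forall phi, G phi -> frag phi) /\ KbiG_defines G C) /\
  (exists (G : form -> Prop) (C : frame_class),
     (forall phi, G phi -> frag phi) /\ KbiG_defines G C /\ ~ K_definable C).

(* On ]0,1[ the Gödel connectives map the unary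
   functions 0, 1 and id to one of them.  Take the fork whose root sees two
   leaves where p has values a < b in ]0,1[.  If p has value b at the root, ◇
   preserves the invariant "the leaves follow a common unary function of the
   value of p, the root one of its own", so a □-free formula takes at the root
   one of the values 0, 1, b, whereas □p takes the value a.  Dually, with value a
   at the root, no ◇-free formula takes the value b of ◇p.  The fork is crisp
   and finite, hence also a finitely branching fuzzy frame, so the argument
   covers all three logics.

   Translating K with atoms guarded by Δ and the missing modality
   read through its classical dual computes K-truth on crisp frames, so every
   K-definable class is definable in either fragment.  The axioms
   □¬¬p → ¬¬□p and Δ◇p → ◇Δp hold on finitely branching frames but fail on
   the fan with one successor for each point of ]0,1[.  No K-definable class
   separates these: on a fan, a K-formula only sees which types of its finitely
   many variables occur among the successors, so its truth transfers to a
   finite fan along a bounded morphism. *)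

From HB Require Import structures.
From mathcomp Require Import all_boot all_order all_algebra.
From mathcomp Require Import boolp classical_sets cardinality reals.
From mathcomp Require Import real_interval Rstruct lra.
Import Order.TTheory GRing.Theory Num.Theory.
Set Implicit Arguments.
Unset Strict Implicit.
Unset Printing Implicit Defensive.
Local Open Scope classical_set_scope.
Local Open Scope ring_scope.

Lemma inf_eq_min (S : set RR) x : S x -> (forall y, S y -> x <= y) -> inf S = x.
Proof.
move=> Sx lb; apply/le_anti/andP; split.
  by apply: ge_inf => //; exists x => y /lb.
by apply: lb_le_inf => //; exists x.
Qed.

Lemma sup_eq_max (S : set RR) x : S x -> (forall y, S y -> y <= x) -> sup S = x.
Proof.
move=> Sx ub; apply/le_anti/andP; split.
  by apply: ge_sup => //; exists x.
by apply: ub_le_sup => //; exists x => y /ub.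
Qed.

Lemma finite_inf_gt (S : set RR) a : finite_set S -> S !=set0 ->
  (forall x, S x -> a < x) -> a < inf S.
Proof.
move=> /finite_seqP[s ->] [y sy] gt_a.
apply: (@lt_le_trans _ _ (\big[Num.min/y]_(x <- s) x)).
  rewrite big_seq; elim/big_ind: _ => [|u v|x]; first exact: gt_a.
    by rewrite lt_min => ->.
  exact: gt_a.
by apply: lb_le_inf; [exists y | move=> z sz; exact: ge_bigmin_seq].
Qed.

Lemma finite_sup_lt (S : set RR) a : finite_set S -> S !=set0 ->
  (forall x, S x -> x < a) -> sup S < a.
Proof.
move=> /finite_seqP[s ->] [y sy] lt_a.
apply: (@le_lt_trans _ _ (\big[Num.max/y]_(x <- s) x)).
  by apply: ge_sup; [exists y | move=> z sz; exact: le_bigmax_seq].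
rewrite big_seq; elim/big_ind: _ => [|u v|x]; first exact: lt_a.
  by rewrite gt_max => ->.
exact: lt_a.
Qed.

Lemma gimp_le a b : a <= b -> gimp a b = 1.
Proof. by rewrite /gimp => ->. Qed.

Lemma gimp_gt a b : b < a -> gimp a b = b.
Proof. by rewrite /gimp leNgt => ->. Qed.

Lemma gimp1 x : x <= 1 -> gimp 1 x = x.
Proof. by move=> x1; rewrite /gimp; case: ifP => // x1'; apply/le_anti; rewrite x1 x1'. Qed.

Lemma giff_eq1 x y : x <= 1 -> y <= 1 -> (Num.min (gimp x y) (gimp y x) == 1) = (x == y).
Proof.
move=> x1 y1; case: (ltgtP x y) => [xy|yx|<-]; last by rewrite gimp_le // minxx !eqxx.
  by rewrite (gimp_le (ltW xy)) (gimp_gt xy) min_r // (lt_eqF (lt_le_trans xy y1)).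
by rewrite (gimp_le (ltW yx)) (gimp_gt yx) min_l // (lt_eqF (lt_le_trans yx x1)).
Qed.

Definition ind (P : Prop) : RR := if `[< P >] then 1 else 0.

Lemma indT (P : Prop) : P -> ind P = 1.
Proof. by rewrite /ind; case: asboolP. Qed.

Lemma indF (P : Prop) : ~ P -> ind P = 0.
Proof. by rewrite /ind; case: asboolP. Qed.

Lemma ind_eq1 (P : Prop) : ind P = 1 -> P.
Proof. by rewrite /ind; case: asboolP => // _ /eqP; rewrite eq_sym oner_eq0. Qed.

Lemma ind01 (P : Prop) : 0 <= ind P <= 1.
Proof. by rewrite /ind; case: asboolP; rewrite ?lexx ?ler01. Qed.

Lemma ind_ext (P Q : Prop) : (P <-> Q) -> ind P = ind Q.
Proof. by move=> /propext ->. Qed.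

Lemma ind_imp (P Q : Prop) : gimp (ind P) (ind Q) = ind (P -> Q).
Proof.
rewrite /ind /gimp; case: asboolP => p; case: asboolP => q; case: asboolP => pq //=;
  rewrite ?lexx ?ler01 ?ler10 //; tauto.
Qed.

Lemma ind_not (P : Prop) : gimp (ind P) 0 = ind (~ P).
Proof. by rewrite -(indF id) ind_imp. Qed.

Lemma ind_and (P Q : Prop) : Num.min (ind P) (ind Q) = ind (P /\ Q).
Proof.
rewrite /ind /Num.min /Order.min; case: asboolP => p; case: asboolP => q;
  case: asboolP => pq //=; rewrite ?ltxx ?ltr01 ?ltr10 //; tauto.
Qed.

Lemma ind_or (P Q : Prop) : Num.max (ind P) (ind Q) = ind (P \/ Q).
Proof.
rewrite /ind /Num.max /Order.max; case: asboolP => p; case: asboolP => q;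
  case: asboolP => pq //=; rewrite ?ltxx ?ltr01 ?ltr10 //; tauto.
Qed.

Lemma gdelta_ind (x : RR) : gcoimp 1 (gcoimp 1 x) = ind (1 <= x).
Proof.
rewrite /ind /gcoimp; case: asboolP => [-> | /negP/negbTE ->]; first by rewrite ler10.
by rewrite lexx.
Qed.

Lemma gnegneg_ind (x : RR) : gimp (gimp x 0) 0 = ind (0 < x).
Proof.
case: (ltP 0 x) => x0; first by rewrite (gimp_gt x0) gimp_le // indT.
by rewrite (gimp_le x0) (gimp_gt ltr01) indF // => /(le_lt_trans x0); rewrite ltxx.
Qed.

Section CrispModalities.
Variables (W : Type) (Rel : W -> W -> Prop).

Lemma crisp_box_ind (P : W -> Prop) w :
  crisp_box Rel (fun v => ind (P v)) w = ind (forall v, Rel w v -> P v).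
Proof.
have [allP|] := asboolP (forall v, Rel w v -> P v).
  rewrite (indT allP); apply: inf_eq_min; first by left.
  by move=> _ [->|[v /allP Pv ->]]; rewrite ?indT.
move=> /existsNP[v /not_implyP[wv nPv]]; rewrite indF; last by move/(_ v wv).
apply: inf_eq_min; first by right; exists v; rewrite ?indF.
by move=> _ [->|[u _ ->]]; [exact: ler01 | case/andP: (ind01 (P u))].
Qed.

Lemma crisp_dia_ind (P : W -> Prop) w :
  crisp_dia Rel (fun v => ind (P v)) w = ind (exists2 v, Rel w v & P v).
Proof.
have [[v wv Pv]|noP] := asboolP (exists2 v, Rel w v & P v).
  rewrite indT; last by exists v.
  apply: sup_eq_max; first by right; exists v; rewrite ?indT.
  by move=> _ [->|[u _ ->]]; [exact: ler01 | case/andP: (ind01 (P u))].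
rewrite (indF noP); apply: sup_eq_max; first by left.
by move=> _ [->|[u wu ->]] //; rewrite indF // => Pu; apply: noP; exists u.
Qed.

End CrispModalities.

Section CrispAsFuzzy.
Variables (W : Type) (Rel : W -> W -> Prop) (f : W -> RR).
Hypothesis f01 : forall w, 0 <= f w <= 1.

Let f0 v : 0 <= f v. Proof. by case/andP: (f01 v). Qed.
Let f1 v : f v <= 1. Proof. by case/andP: (f01 v). Qed.

Lemma fuzzy_box_crisp : fuzzy_box (fun w v => ind (Rel w v)) f = crisp_box Rel f.
Proof.
apply/funext => w; congr inf; apply/seteqP; split=> [_ [->|[v ->]] | _ [->|[v wv ->]]].
- by left.
- case: (asboolP (Rel w v)) => [wv|nwv]; first by right; exists v; rewrite // indT // gimp1.
  by left; rewrite indF // gimp_le.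
- by left.
- by right; exists v; rewrite indT // gimp1.
Qed.

Lemma fuzzy_dia_crisp : fuzzy_dia (fun w v => ind (Rel w v)) f = crisp_dia Rel f.
Proof.
apply/funext => w; congr sup; apply/seteqP; split=> [_ [->|[v ->]] | _ [->|[v wv ->]]].
- by left.
- case: (asboolP (Rel w v)) => [wv|nwv]; first by right; exists v; rewrite // indT // min_r.
  by left; rewrite indF // min_l.
- by left.
- by right; exists v; rewrite indT // min_r.
Qed.

End CrispAsFuzzy.

Definition fan (X : Type) (P : X -> Prop) (w v : option X) : Prop :=
  if (w, v) is (None, Some x) then P x else False.

Lemma fan_fb (X : finType) (P : X -> Prop) : crisp_fb (fan P).
Proof. by move=> w; exact: finite_finset. Qed.

(** * Non-interdefinability *)

Inductive gunary := GZero | GOne | GId.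

Definition gunary_val (s : gunary) (x : RR) : RR :=
  match s with GZero => 0 | GOne => 1 | GId => x end.

Lemma gunary_val_01 s x : 0 <= x <= 1 -> 0 <= gunary_val s x <= 1.
Proof. by case: s => //= _; rewrite lexx ler01. Qed.

Lemma gunary_val_le1 s x : x <= 1 -> gunary_val s x <= 1.
Proof. by case: s => //= _; rewrite lexx. Qed.

Lemma gunary_val_mono s : {homo gunary_val s : x y / x <= y}.
Proof. by case: s. Qed.

Definition gunary_closed (op : RR -> RR -> RR) : Prop :=
  forall s t, exists u, forall x, 0 < x < 1 ->
    op (gunary_val s x) (gunary_val t x) = gunary_val u x.

Ltac gunary_close :=
  move=> x /andP[x0 x1] /=;
  rewrite /gimp /gcoimp /Num.min /Num.max /Order.min /Order.max;
  repeat (case: ifP => /=; rewrite ?ltxx ?lexx //; move=> ?); lra.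

Ltac gunary_witness :=
  case; case; first [exists GZero; by gunary_close | exists GOne; by gunary_close
                    | exists GId; by gunary_close].

Lemma gunary_closed_min : gunary_closed Num.min.
Proof. by gunary_witness. Qed.

Lemma gunary_closed_max : gunary_closed Num.max.
Proof. by gunary_witness. Qed.

Lemma gunary_closed_gimp : gunary_closed gimp.
Proof. by gunary_witness. Qed.

Lemma gunary_closed_gcoimp : gunary_closed gcoimp.
Proof. by gunary_witness. Qed.

Notation fork := (fan (fun _ : bool => True)).

Definition fork_val (a b c : RR) (n : nat) (w : option bool) : RR :=
  match w with None => c | Some false => a | Some true => b end.

Lemma fork_val_unit a b c : 0 <= a <= 1 -> 0 <= b <= 1 -> 0 <= c <= 1 ->
  unit_val (fork_val a b c).
Proof. by move=> ? ? ? n [[]|]. Qed.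

Lemma crisp_box_fork f : (forall w, f w <= 1) ->
  crisp_box fork f = fun w => if w is None then Num.min (f (Some false)) (f (Some true)) else 1.
Proof.
move=> f1; apply/funext => -[w|]; apply: inf_eq_min.
- by left.
- by move=> y [->|[? []]].
- by case: (leP (f (Some false)) (f (Some true))) => _; right;
    [exists (Some false) | exists (Some true)].
- by move=> y [->|[[[]|] // _ ->]]; rewrite ge_min ?lexx ?orbT // f1.
Qed.

Lemma crisp_dia_fork f : (forall w, 0 <= f w) ->
  crisp_dia fork f = fun w => if w is None then Num.max (f (Some false)) (f (Some true)) else 0.
Proof.
move=> f0; apply/funext => -[w|]; apply: sup_eq_max.
- by left.
- by move=> y [->|[? []]].
- by case: (leP (f (Some false)) (f (Some true))) => _; right;
    [exists (Some true) | exists (Some false)].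
- by move=> y [->|[[[]|] // _ ->]]; rewrite le_max ?lexx ?orbT // f0.
Qed.

Section ForkInvariant.
Variables (a b c : RR).
Hypotheses (a01 : 0 < a < 1) (b01 : 0 < b < 1) (c01 : 0 < c < 1) (ab : a <= b).

Definition fork_tame (f : option bool -> RR) : Prop :=
  exists s t, [/\ f (Some false) = gunary_val s a, f (Some true) = gunary_val s b
                & f None = gunary_val t c].

Lemma fork_tame_op op f g : gunary_closed op -> fork_tame f -> fork_tame g ->
  fork_tame (fun w => op (f w) (g w)).
Proof.
move=> cl [s [t [f0 f1 fr]]] [s' [t' [g0 g1 gr]]].
have [u opu] := cl s s'; have [u' opu'] := cl t t'.
by exists u, u'; rewrite f0 f1 fr g0 g1 gr !(opu, opu').
Qed.

Lemma fork_tame_01 f : fork_tame f -> forall w, 0 <= f w <= 1.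
Proof.
have w01 (x : RR) : 0 < x < 1 -> 0 <= x <= 1 by case/andP => *; apply/andP; split; lra.
by move=> [s [t [f0 f1 fr]]] [[]|]; rewrite ?f0 ?f1 ?fr; apply/gunary_val_01/w01.
Qed.

Lemma eval_fork_tame bx dx :
  (forall f, fork_tame f -> fork_tame (bx f)) -> (forall f, fork_tame f -> fork_tame (dx f)) ->
  forall phi, fork_tame (eval bx dx (fork_val a b c) phi).
Proof.
move=> bxT dxT; elim=> [n|||x IHx y IHy|x IHx y IHy|x IHx y IHy|x IHx y IHy|x IHx|x IHx] /=.
- by exists GId, GId.
- by exists GZero, GZero.
- by exists GOne, GOne.
- exact: fork_tame_op gunary_closed_min IHx IHy.
- exact: fork_tame_op gunary_closed_max IHx IHy.
- exact: fork_tame_op gunary_closed_gimp IHx IHy.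
- exact: fork_tame_op gunary_closed_gcoimp IHx IHy.
- exact: bxT.
- exact: dxT.
Qed.

Lemma crisp_box_fork_tame f : c = a -> fork_tame f -> fork_tame (crisp_box fork f).
Proof.
move=> ca fT; have [s [t [f0 f1 _]]] := fT.
rewrite crisp_box_fork => [|w]; last by case/andP: (fork_tame_01 fT w).
by exists GOne, s; rewrite f0 f1 ca min_l //; apply: gunary_val_mono.
Qed.

Lemma crisp_dia_fork_tame f : c = b -> fork_tame f -> fork_tame (crisp_dia fork f).
Proof.
move=> cb fT; have [s [t [f0 f1 _]]] := fT.
rewrite crisp_dia_fork => [|w]; last by case/andP: (fork_tame_01 fT w).
by exists GZero, s; rewrite f0 f1 cb max_r //; apply: gunary_val_mono.
Qed.

End ForkInvariant.

Lemma eval_box_free W (bx bx' dx : (W -> RR) -> W -> RR) (V : nat -> W -> RR) phi :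
  box_free phi -> eval bx dx V phi = eval bx' dx V phi.
Proof.
elim: phi => [n|||x IHx y IHy|x IHx y IHy|x IHx y IHy|x IHx y IHy|x IHx|x IHx] //=;
  by [move=> /andP[/IHx -> /IHy ->] | move=> /IHx ->].
Qed.

Lemma eval_dia_free W (bx dx dx' : (W -> RR) -> W -> RR) (V : nat -> W -> RR) phi :
  dia_free phi -> eval bx dx V phi = eval bx dx' V phi.
Proof.
elim: phi => [n|||x IHx y IHy|x IHx y IHy|x IHx y IHy|x IHx y IHy|x IHx|x IHx] //=;
  by [move=> /andP[/IHx -> /IHy ->] | move=> /IHx ->].
Qed.

Lemma gunary_val_neq x c t : 0 < x < 1 -> x != c -> x != gunary_val t c.
Proof. by move=> /andP[x0 x1] xc; case: t => //=; rewrite ?(gt_eqF x0) ?(lt_eqF x1). Qed.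

Section ForkRoot.
Variables (a b : RR) (bx dx : (option bool -> RR) -> option bool -> RR).
Hypotheses (a01 : 0 < a < 1) (b01 : 0 < b < 1) (ab : a <= b).

Lemma fork_root_box_free chi :
  (forall f, (forall w, 0 <= f w <= 1) -> dx f = crisp_dia fork f) ->
  box_free chi -> exists t, eval bx dx (fork_val a b b) chi None = gunary_val t b.
Proof.
move=> dxE chi_free; rewrite (eval_box_free _ (fun _ _ => 1) _ _ chi_free).
have [|f fT|_ [t [_ _ ->]]] := eval_fork_tame a01 b01 b01 (bx := fun _ _ => 1) (dx := dx) _ _ chi.
- by move=> f _; exists GOne, GOne.
- by rewrite dxE; [exact: crisp_dia_fork_tame | exact: fork_tame_01 fT].
- by exists t.
Qed.

Lemma fork_root_dia_free chi :
  (forall f, (forall w, 0 <= f w <= 1) -> bx f = crisp_box fork f) ->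
  dia_free chi -> exists t, eval bx dx (fork_val a b a) chi None = gunary_val t a.
Proof.
move=> bxE chi_free; rewrite (eval_dia_free _ _ (fun _ _ => 0) _ chi_free).
have [f fT||_ [t [_ _ ->]]] := eval_fork_tame a01 b01 a01 (bx := bx) (dx := fun _ _ => 0) _ _ chi.
- by rewrite bxE; [exact: crisp_box_fork_tame | exact: fork_tame_01 fT].
- by move=> f _; exists GZero, GZero.
- by exists t.
Qed.

End ForkRoot.

Lemma not_interdefinable_fork (L : form -> Prop)
    (bx dx : (option bool -> RR) -> option bool -> RR) :
  (forall f, (forall w, 0 <= f w <= 1) -> bx f = crisp_box fork f) ->
  (forall f, (forall w, 0 <= f w <= 1) -> dx f = crisp_dia fork f) ->
  (forall phi, L phi -> forall V, unit_val V -> eval bx dx V phi None = 1) ->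
  not_interdefinable L.
Proof.
move=> bxE dxE sound; pose a : RR := 1/3; pose b : RR := 2/3.
have a01 : 0 < a < 1 by apply/andP; split; rewrite /a; lra.
have b01 : 0 < b < 1 by apply/andP; split; rewrite /b; lra.
have ab : a < b by rewrite /a /b; lra.
have [a1 b1] : a <= 1 /\ b <= 1 by split; rewrite /a /b; lra.
have [a01' b01'] : 0 <= a <= 1 /\ 0 <= b <= 1 by split; apply/andP; split; rewrite /a /b; lra.
have V01 c : 0 <= c <= 1 -> unit_val (fork_val a b c) by exact: fork_val_unit.
split=> -[chi [chi_free /sound L_iff]].
- have [t chi_t] := fork_root_box_free bx a01 b01 (ltW ab) dxE chi_free.
  have /= := L_iff _ (V01 b b01'); rewrite chi_t bxE; last exact: V01 b b01' 0.
  rewrite crisp_box_fork /= ?(min_l (ltW ab)); last by move=> w; case/andP: (V01 b b01' 0 w).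
  move=> /eqP; rewrite giff_eq1 ?gunary_val_le1 //.
  by apply/negP; apply: gunary_val_neq; rewrite // lt_eqF.
- have [t chi_t] := fork_root_dia_free dx a01 b01 (ltW ab) bxE chi_free.
  have /= := L_iff _ (V01 a a01'); rewrite chi_t dxE; last exact: V01 a a01' 0.
  rewrite crisp_dia_fork /= ?(max_r (ltW ab)); last by move=> w; case/andP: (V01 a a01' 0 w).
  move=> /eqP; rewrite giff_eq1 ?gunary_val_le1 //.
  by apply/negP; apply: gunary_val_neq; rewrite // gt_eqF.
Qed.

Lemma not_interdefinable_sub (L L' : form -> Prop) :
  (forall phi, L' phi -> L phi) -> not_interdefinable L -> not_interdefinable L'.
Proof.
by move=> L'L [nbox ndia]; split=> -[chi [chi_free /L'L L_iff]];
  [apply: nbox | apply: ndia]; exists chi.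
Qed.

Lemma not_interdefinable_KbiG : not_interdefinable KbiG.
Proof.
by apply: (@not_interdefinable_fork _ (crisp_box fork) (crisp_dia fork)) => // phi valid V /valid.
Qed.

Lemma not_interdefinable_KbiGf_fb : not_interdefinable KbiGf_fb.
Proof.
pose Rd w v := ind (fork w v).
apply: (@not_interdefinable_fork _ (fuzzy_box Rd) (fuzzy_dia Rd)).
- exact: fuzzy_box_crisp.
- exact: fuzzy_dia_crisp.
- move=> phi valid V V01; apply: valid V01 None; first by move=> w v; exact: ind01.
  by move=> w; exact: finite_finset.
Qed.

(** * Expressivity over K *)

Definition Neg (phi : form) : form := Imp phi Bot.
Definition Delta (phi : form) : form := Coimp Top (Coimp Top phi).

(* Atoms are guarded by Δ, so on crisp frames every value is 0 or 1 and the
   missing modality can be read as the classical dual of the other one. *)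
Fixpoint ktrans (b : bool) (phi : kform) : form :=
  match phi with
  | KVar n => Delta (Var n)
  | KBot => Bot
  | KImp x y => Imp (ktrans b x) (ktrans b y)
  | KAnd x y => And (ktrans b x) (ktrans b y)
  | KOr x y => Or (ktrans b x) (ktrans b y)
  | KBox x => if b then Box (ktrans b x) else Neg (Dia (Neg (ktrans b x)))
  | KDia x => if b then Neg (Box (Neg (ktrans b x))) else Dia (ktrans b x)
  end.

Lemma ktrans_dia_free phi : dia_free (ktrans true phi).
Proof. by elim: phi => [n||x hx y hy|x hx y hy|x hx y hy|x hx|x hx] /=; rewrite ?hx ?hy. Qed.

Lemma ktrans_box_free phi : box_free (ktrans false phi).
Proof. by elim: phi => [n||x hx y hy|x hx y hy|x hx y hy|x hx|x hx] /=; rewrite ?hx ?hy. Qed.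

Lemma eval_ktrans b W (Rel : W -> W -> Prop) (V : nat -> W -> RR) phi w :
  eval (crisp_box Rel) (crisp_dia Rel) V (ktrans b phi) w =
  ind (ksat Rel (fun n v => 1 <= V n v) w phi).
Proof.
elim: phi w => [n||x IHx y IHy|x IHx y IHy|x IHx y IHy|x IHx|x IHx] w /=.
- exact: gdelta_ind.
- by rewrite indF.
- by rewrite IHx IHy ind_imp.
- by rewrite IHx IHy ind_and.
- by rewrite IHx IHy ind_or.
- case: b IHx => IHx /=; first by rewrite (funext IHx) crisp_box_ind.
  under eq_fun do rewrite IHx ind_not.
  rewrite crisp_dia_ind ind_not; apply: ind_ext; split.
    by move=> nex v wv; apply: contra_notP nex => nx; exists v.
  by move=> all [v wv]; apply; exact: all.
- case: b IHx => IHx /=; last by rewrite (funext IHx) crisp_dia_ind.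
  under eq_fun do rewrite IHx ind_not.
  rewrite crisp_box_ind ind_not; apply: ind_ext; split.
    by move=> nall; apply: contra_notP nall => nex v wv xv; apply: nex; exists v.
  by move=> [v wv xv] /(_ v wv).
Qed.

Lemma ksat_ext W (Rel : W -> W -> Prop) (V V' : nat -> W -> Prop) :
  (forall n w, V n w <-> V' n w) -> forall phi w, ksat Rel V w phi <-> ksat Rel V' w phi.
Proof.
move=> VV'; elim=> [n||x IHx y IHy|x IHx y IHy|x IHx y IHy|x IHx|x IHx] w //=.
- by rewrite IHx IHy.
- by rewrite IHx IHy.
- by rewrite IHx IHy.
- by split=> h v wv; apply/IHx; exact: h.
- by split=> -[v wv h]; exists v => //; apply/IHx.
Qed.

Lemma crisp_frame_valid_ktrans b W (Rel : W -> W -> Prop) phi :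
  crisp_frame_valid Rel (ktrans b phi) <-> forall V w, ksat Rel V w phi.
Proof.
split=> [valid V w | ksat_all V _ w]; last by rewrite eval_ktrans indT.
have /valid/(_ w) : unit_val (fun n v => ind (V n v)) by move=> n v; exact: ind01.
rewrite eval_ktrans => /ind_eq1; apply: (iffLR (ksat_ext _ _ _ _)) => n v.
by rewrite /ind; case: asboolP => Vv; rewrite ?lexx ?ler10.
Qed.

Lemma K_definable_fragment (frag : form -> bool) b :
  (forall psi, frag (ktrans b psi)) ->
  forall C : frame_class, K_definable C ->
  exists G : form -> Prop, (forall phi, G phi -> frag phi) /\ KbiG_defines G C.
Proof.
move=> frag_tr C [G defG]; exists (fun phi => exists2 psi, G psi & phi = ktrans b psi).
split=> [_ [psi _ ->] // | W Rel]; rewrite defG; split.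
  by move=> valid _ [psi Gpsi ->]; apply/crisp_frame_valid_ktrans; exact: valid.
by move=> valid psi Gpsi; apply/(crisp_frame_valid_ktrans b); apply: valid; exists psi.
Qed.

Fixpoint kvar_bound (phi : kform) : nat :=
  match phi with
  | KVar n => n.+1
  | KBot => 0
  | KImp x y | KAnd x y | KOr x y => maxn (kvar_bound x) (kvar_bound y)
  | KBox x | KDia x => kvar_bound x
  end.

Section BoundedMorphism.
Variables (W W' : Type) (R : W -> W -> Prop) (R' : W' -> W' -> Prop) (f : W -> W').
Variables (V : nat -> W -> Prop) (V' : nat -> W' -> Prop) (N : nat).
Hypothesis forth : forall w v, R w v -> R' (f w) (f v).
Hypothesis back : forall w v', R' (f w) v' -> exists2 v, R w v & f v = v'.
Hypothesis harmony : forall n w, (n < N)%N -> V n w <-> V' n (f w).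

Lemma ksat_bounded_morphism phi : (kvar_bound phi <= N)%N ->
  forall w, ksat R V w phi <-> ksat R' V' (f w) phi.
Proof.
elim: phi => [n||x IHx y IHy|x IHx y IHy|x IHx y IHy|x IHx|x IHx] //=;
  rewrite ?geq_max; try by move=> /andP[/IHx hx /IHy hy] w; rewrite hx hy.
- by move=> nN w; exact: harmony.
- move=> /IHx hx w; split=> [all v' /back[v wv <-] | all v wv].
    by apply/hx; exact: all.
  by apply/hx; apply: all; exact: forth.
- move=> /IHx hx w; split=> [[v wv xv] | [v' /back[v wv <-] xv]].
    by exists (f v); [exact: forth | exact/hx].
  by exists v => //; exact/hx.
Qed.

End BoundedMorphism.

Section FanTypes.
Variables (X : Type) (P : X -> Prop) (V : nat -> option X -> Prop) (N : nat).

Definition ktype (x : X) : {ffun 'I_N -> bool} := [ffun i : 'I_N => `[< V i (Some x) >]].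

Definition ktype_val (n : nat) (w : option {ffun 'I_N -> bool}) : Prop :=
  if w is Some t then exists h : (n < N)%N, t (Ordinal h) else V n None.

(* Identifying successors with the same type of the first [N] variables is a
   bounded morphism onto a finite fan. *)
Lemma ksat_fan_ktype phi : (kvar_bound phi <= N)%N -> forall w,
  ksat (fan P) V w phi <->
  ksat (fan (fun t => exists2 x, P x & ktype x = t)) ktype_val (omap ktype w) phi.
Proof.
apply: ksat_bounded_morphism.
- by move=> [x|] [y|] //= Py; exists y.
- by move=> [x|] [t|] //= [y Py <-]; exists (Some y).
- move=> n [x|] nN //=; split=> [Vx | [h]]; first by exists nN; rewrite ffunE; exact/asboolP.
  by rewrite ffunE => /asboolP.
Qed.

End FanTypes.

Lemma K_definable_fan (C : frame_class) : K_definable C ->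
  (forall (Y : finType) (Q : Y -> Prop), C _ (fan Q)) ->
  forall (X : Type) (P : X -> Prop), C _ (fan P).
Proof.
move=> [G defG] finC X P; apply/defG => phi Gphi V w.
apply/(ksat_fan_ktype P V (leqnn (kvar_bound phi))).
by apply: (iffLR (defG _ _)) Gphi _ _; exact: finC.
Qed.

Definition box_fb_axiom : form :=
  Imp (Box (Neg (Neg (Var 0)))) (Neg (Neg (Box (Var 0)))).

Definition dia_fb_axiom : form := Imp (Delta (Dia (Var 0))) (Dia (Delta (Var 0))).

Section FiniteBranching.
Variables (W : Type) (Rel : W -> W -> Prop).

Lemma eval_box_fb_axiom bx V w : eval (crisp_box Rel) bx V box_fb_axiom w =
  ind ((forall v, Rel w v -> 0 < V 0 v) -> 0 < crisp_box Rel (V 0) w).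
Proof.
by rewrite /=; under eq_fun do rewrite gnegneg_ind; rewrite crisp_box_ind gnegneg_ind ind_imp.
Qed.

Lemma eval_dia_fb_axiom bx V w : eval bx (crisp_dia Rel) V dia_fb_axiom w =
  ind (1 <= crisp_dia Rel (V 0) w -> exists2 v, Rel w v & 1 <= V 0 v).
Proof.
by rewrite /=; under eq_fun do rewrite gdelta_ind; rewrite crisp_dia_ind gdelta_ind ind_imp.
Qed.

Hypothesis fbRel : crisp_fb Rel.

Lemma finite_succ_values (f : W -> RR) w :
  finite_set [set x | exists2 v, Rel w v & x = f v].
Proof.
have -> : [set x | exists2 v, Rel w v & x = f v] = f @` [set v | Rel w v].
  by apply/seteqP; split=> x [v wv fv]; exists v.
exact/finite_image/fbRel.
Qed.

Lemma crisp_box_gt0 (f : W -> RR) w :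
  (forall v, Rel w v -> 0 < f v) -> 0 < crisp_box Rel f w.
Proof.
move=> f_gt0; apply: finite_inf_gt; last by move=> _ [->|[v /f_gt0 ? ->]].
  by rewrite finite_setU; split; [exact: finite_set1 | exact: finite_succ_values].
by exists 1; left.
Qed.

Lemma crisp_dia_lt1 (f : W -> RR) w :
  (forall v, Rel w v -> f v < 1) -> crisp_dia Rel f w < 1.
Proof.
move=> f_lt1; apply: finite_sup_lt; last by move=> _ [->|[v /f_lt1 ? ->]].
  by rewrite finite_setU; split; [exact: finite_set1 | exact: finite_succ_values].
by exists 0; left.
Qed.

Lemma box_fb_axiom_valid : crisp_frame_valid Rel box_fb_axiom.
Proof. by move=> V _ w; rewrite eval_box_fb_axiom indT //; exact: crisp_box_gt0. Qed.

Lemma dia_fb_axiom_valid : crisp_frame_valid Rel dia_fb_axiom.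
Proof.
move=> V _ w; rewrite eval_dia_fb_axiom indT // => dia1; apply: contrapT => none1.
suff : crisp_dia Rel (V 0) w < 1 by rewrite ltNge dia1.
by apply: crisp_dia_lt1 => v wv; rewrite ltNge; apply/negP => ?; apply: none1; exists v.
Qed.

End FiniteBranching.

Notation unit_itv_fan := (fan (fun r : RR => 0 < r < 1)).

Definition unit_itv_val (n : nat) (w : option RR) : RR :=
  if w is Some r then (if 0 < r < 1 then r else 0) else 0.

Lemma unit_itv_val_unit : unit_val unit_itv_val.
Proof.
move=> n [r|] /=; last by rewrite lexx ler01.
by case: ifP => [/andP[? ?]|_]; rewrite ?lexx ?ler01 //; apply/andP; split; lra.
Qed.

Lemma fan_unit_itv_values :
  [set x | exists2 v, unit_itv_fan None v & x = unit_itv_val 0 v] = `]0, 1[%classic.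
Proof.
apply/seteqP; split=> [_ [[r|] //= r01 ->] | r r01].
  by rewrite r01 /= in_itv.
by rewrite /= in_itv /= in r01; exists (Some r); rewrite //= r01.
Qed.

Lemma box_fb_axiom_fan_invalid : ~ crisp_frame_valid unit_itv_fan box_fb_axiom.
Proof.
move=> /(_ _ unit_itv_val_unit None); rewrite eval_box_fb_axiom => /ind_eq1.
have -> : crisp_box unit_itv_fan (unit_itv_val 0) None = 0.
  rewrite /crisp_box fan_unit_itv_values.
  have -> : [set 1 : RR] `|` `]0, 1[%classic = `]0, 1]%classic.
    apply/seteqP; split=> [r [->|]|r]; rewrite /= ?in_itv /= ?lexx ?ltr01 //.
      by move=> /andP[-> /ltW].
    by move=> /andP[r0]; rewrite le_eqVlt => /orP[/eqP ->|r1]; [left | right; rewrite r0].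
  by rewrite inf_itv // bnd_simp ltr01.
suff all_pos v : unit_itv_fan None v -> 0 < unit_itv_val 0 v by rewrite ltxx => /(_ all_pos).
by case: v => [r|] //= r01; rewrite r01; case/andP: r01.
Qed.

Lemma dia_fb_axiom_fan_invalid : ~ crisp_frame_valid unit_itv_fan dia_fb_axiom.
Proof.
move=> /(_ _ unit_itv_val_unit None); rewrite eval_dia_fb_axiom => /ind_eq1.
have -> : crisp_dia unit_itv_fan (unit_itv_val 0) None = 1.
  rewrite /crisp_dia fan_unit_itv_values.
  have -> : [set 0 : RR] `|` `]0, 1[%classic = `[0, 1[%classic.
    apply/seteqP; split=> [r [->|]|r]; rewrite /= ?in_itv /= ?lexx ?ltr01 //.
      by move=> /andP[/ltW -> ->].
    by move=> /andP[]; rewrite le_eqVlt => /orP[/eqP <-|r0 r1]; [left | right; rewrite r0].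
  by rewrite sup_itv // bnd_simp ltr01.
move=> /(_ (lexx 1)) [[r|] //= r01].
by rewrite r01; case/andP: r01 => _; rewrite ltNge => /negbTE ->.
Qed.

Lemma more_expressive_than_K_fragment (frag : form -> bool) b (Ax : form) :
  (forall psi, frag (ktrans b psi)) -> frag Ax ->
  (forall W (Rel : W -> W -> Prop), crisp_fb Rel -> crisp_frame_valid Rel Ax) ->
  ~ crisp_frame_valid unit_itv_fan Ax ->
  more_expressive_than_K frag.
Proof.
move=> frag_tr fragAx fbAx Ax_fan; split; first exact: K_definable_fragment frag_tr.
exists (fun phi => phi = Ax), (fun W Rel => crisp_frame_valid Rel Ax).
split; [by move=> _ -> | split; first by move=> W Rel; split=> [? _ -> | /(_ Ax erefl)]].
move=> /K_definable_fan fanC; apply/Ax_fan/fanC => Y Q.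
exact/fbAx/fan_fb.
Qed.

Theorem corollary2 :
  (not_interdefinable KbiG /\ not_interdefinable KbiGf_fb /\ not_interdefinable KbiGf) /\
  (more_expressive_than_K dia_free (* □-fragment *) /\
   more_expressive_than_K box_free (* ◇-fragment *)).
Proof.
have KbiGf_fb_of_KbiGf phi : KbiGf phi -> KbiGf_fb phi by move=> valid W Rd Rd01 _; exact: valid.
split; split.
- exact: not_interdefinable_KbiG.
- split; first exact: not_interdefinable_KbiGf_fb.
  exact: not_interdefinable_sub KbiGf_fb_of_KbiGf not_interdefinable_KbiGf_fb.
- exact: more_expressive_than_K_fragment ktrans_dia_free _ box_fb_axiom_valid
    box_fb_axiom_fan_invalid.
- exact: more_expressive_than_K_fragment ktrans_box_free _ dia_fb_axiom_valid
    dia_fb_axiom_fan_invalid.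
Qed.
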